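(* Let $n\ge1$, $\gamma>0$, let $\phi:I\to\mathbb{R}$ be a proper closed convex function on an interval $I$, let $\psi=\phi^*$, and let $\hat X\in\mathcal{U}(\mu,\nu)$ (for some probability vectors $\mu,\nu\in\mathbb{R}^n$) satisfy $\hat X_{ij}\in\operatorname{int}(\operatorname{dom}\phi)$ for all $i,j$. Then the infimum $$\inf_{C\in S_h,\ u,v\in\mathbb{R}^n} E(u,v,C):=\psi\Big(\frac{u\oplus v-C}{\gamma}\Big)-\Big\langle\frac{u\oplus v-C}{\gamma},\hat X\Big\rangle$$ is attained. Moreover, if $(u^*,v^*,C^* )$ is a minimizer and $\psi$ is twice differentiable with $\psi''>0$ at each entry of $(u^*\oplus v^*-C^* )/\gamma$, then the optimal $C^*\in S_h$ is unique.
   Context: $\mathcal{U}(\mu,\nu):=\{X\in\mathbb{R}_+^{n\times n}: X\mathbf{1}=\mu,\ X^\top\mathbf{1}=\nu\}$. $S_h:=\{C\in\mathbb{R}_+^{n\times n}: C=C^\top,\ \operatorname{diag}(C)=0\}$. $\psi:=\phi^*$ is the Fenchel conjugate; for a matrix $Z$, $\psi(Z):=\sum_{i,j}\psi(Z_{ij})$. $(u\oplus v)_{ij}:=u_i+v_j$. *)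

From HB Require Import structures.
From mathcomp Require Import all_boot all_order all_algebra.
From mathcomp Require Import all_classical all_reals all_analysis.
Set Implicit Arguments. Unset Strict Implicit. Unset Printing Implicit Defensive.
Import Order.TTheory GRing.Theory Num.Theory.
Import numFieldNormedType.Exports.
Local Open Scope classical_set_scope.
Local Open Scope ring_scope.

Section Defs.
Variable R : realType.

Definition edom (phi : R -> \bar R) : set R := [set x | (phi x < +oo)%E].

(* phi : I -> R proper closed convex on an interval I, encoded as
   phi : R -> \bar R equal to +oo outside I = dom phi. *)
Definition proper_closed_convex (phi : R -> \bar R) : Prop :=
  [/\ (forall x, phi x != -oo%E),
      (exists x, (phi x < +oo)%E),
      (forall x y t : R, (phi x < +oo)%E -> (phi y < +oo)%E -> (0 <= t <= 1)%R ->
          (phi (t * x + (1 - t) * y)%R <=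
             (t * fine (phi x) + (1 - t) * fine (phi y))%R%:E)%E) &
      (* closed = lower semicontinuous *)
      (forall x (a : R), (a%:E < phi x)%E -> \forall y \near x, (a%:E < phi y)%E)].

Definition fconj (phi : R -> \bar R) (y : R) : \bar R :=
  ereal_sup (range (fun x => ((x * y)%:E - phi x)%E)).

Definition prob_vec n (mu : 'I_n -> R) : Prop :=
  (forall i, 0 <= mu i) /\ \sum_(i < n) mu i = 1.

Definition transport_plan n (mu nu : 'I_n -> R) (X : 'M[R]_n) : Prop :=
  [/\ (forall i j, 0 <= X i j),
      (forall i, \sum_(j < n) X i j = mu i) &
      (forall j, \sum_(i < n) X i j = nu j)].

Definition Sh n (C : 'M[R]_n) : Prop :=
  [/\ (forall i j, 0 <= C i j), (forall i j, C i j = C j i) & (forall i, C i i = 0)].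

Definition Zmat n (gamma : R) (u v : 'I_n -> R) (C : 'M[R]_n) (i j : 'I_n) : R :=
  (u i + v j - C i j) / gamma.

Definition Eobj n (psi : R -> \bar R) (gamma : R) (Xh : 'M[R]_n)
    (u v : 'I_n -> R) (C : 'M[R]_n) : \bar R :=
  (\sum_(i < n) \sum_(j < n)
     (psi (Zmat gamma u v C i j) - (Zmat gamma u v C i j * Xh i j)%:E))%E.

Definition is_minimizer n (psi : R -> \bar R) (gamma : R) (Xh : 'M[R]_n)
    (u v : 'I_n -> R) (C : 'M[R]_n) : Prop :=
  Sh C /\ forall u' v' (C' : 'M[R]_n), Sh C' ->
     (Eobj psi gamma Xh u v C <= Eobj psi gamma Xh u' v' C')%E.

Definition twice_diff_pos (psi : R -> \bar R) (y : R) : Prop :=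
  let f := fun x => fine (psi x) in
  [/\ (\forall x \near y, psi x \is a fin_num /\ derivable f x 1),
      derivable (derive1 f) y 1 &
      0 < derive1 (derive1 f) y].

End Defs.

(* Existence: psi = phi^* is convex, lower semicontinuous and never -oo, and
   since each Xh_ij is interior to dom phi, Fenchel-Young at Xh_ij +- d gives
   psi y - y * Xh_ij >= d |y| - c.  So on a sublevel set of E every entry of
   W = u (+) v - C is bounded; as C is symmetric with zero diagonal, so are C
   and the normalised potentials (u - u_i0, v + u_i0), which leave E unchanged.
   A lower semicontinuous function attains its minimum on the resulting
   compact set.  Only the interiority of the entries of Xh is used, not its
   marginals.
   Uniqueness: S_h is convex and E is convex in (u, v, C), so between two
   minimizers the convexity gaps of psi at the entries of Z vanish, i.e. psi
   is affine on each segment [Z_ij, Z'_ij].  An affine piece starting at Z_ij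
   forces psi''(Z_ij) = 0, hence Z' = Z, and Z determines C on S_h. *)

From HB Require Import structures.
From mathcomp Require Import all_boot all_order all_algebra.
From mathcomp Require Import all_classical all_reals all_analysis.
From mathcomp Require Import ring lra.
Import Order.TTheory GRing.Theory Num.Theory.
Import numFieldNormedType.Exports.
Local Open Scope classical_set_scope.
Local Open Scope ring_scope.

Lemma lte_dense_EFin {R : realType} (x y : \bar R) :
  (x < y)%E -> exists a : R, (x < a%:E < y)%E.
Proof.
case: x => [x||]; case: y => [y||] //=.
- by rewrite lte_fin => xy; exists ((x + y) / 2); rewrite !lte_fin !midf_lt.
- by move=> _; exists (x + 1); rewrite lte_fin ltrDl ltr01 ltry.
- by move=> _; exists (y - 1); rewrite lte_fin gtrBl ltr01 ltNyr.
- by move=> _; exists 0; rewrite ltNyr ltry.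
Qed.

Lemma esum_neqNy {R : realType} (I : eqType) (s : seq I) (F : I -> \bar R) :
  (forall i, F i != -oo%E) -> (\sum_(i <- s) F i)%E != -oo%E.
Proof. by move=> FNy; apply/eqP => /esum_eqNyP[i [_ _ /eqP]]; apply/negP. Qed.

Lemma ler_psum_term {R : realDomainType} {I : finType} (F : I -> R) i :
  (forall j, 0 <= F j) -> F i <= \sum_j F j.
Proof. by move=> F0; rewrite (bigD1 i) //= lerDl sumr_ge0. Qed.

Section lower_semicontinuous.
Context {T : topologicalType} {R : realType}.
Implicit Types f g : T -> \bar R.
Local Open Scope ereal_scope.

Lemma lower_semicontinuousE f : lower_semicontinuous f <->
  forall x (a : R), a%:E < f x -> \forall y \near x, a%:E < f y.
Proof.
split=> lf x a /lf; first by move=> [V xV Vf]; exact: filterS Vf xV.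
by exists [set y | a%:E < f y].
Qed.

Lemma lower_semicontinuousD f g :
  (forall x, f x != -oo) -> (forall x, g x != -oo) ->
  lower_semicontinuous f -> lower_semicontinuous g ->
  lower_semicontinuous (fun x => f x + g x).
Proof.
move=> fNy gNy /lower_semicontinuousE lf /lower_semicontinuousE lg.
apply/lower_semicontinuousE => x a afg.
suff [b bf agb] : exists2 b : R, b%:E < f x & (a - b)%:E < g x.
  apply: filterS2 (lf x b bf) (lg x _ agb) => y fy gy.
  by rewrite -(subrKC b a) EFinD lteD.
move: afg (gNy x); case: (g x) => [r|_ _|//].
- rewrite -lteBlDr // -EFinB => /lte_dense_EFin[b /andP[]]; rewrite lte_fin => arb bf _.
  by exists b; rewrite // lte_fin; lra.
- have /lte_dense_EFin[b /andP[_ bf]] : -oo < f x by rewrite ltNye.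
  by exists b; rewrite ?ltry.
Qed.

Lemma lower_semicontinuous_sum (I : eqType) (s : seq I) (F : I -> T -> \bar R) :
  (forall i x, F i x != -oo) -> (forall i, lower_semicontinuous (F i)) ->
  lower_semicontinuous (fun x => \sum_(i <- s) F i x).
Proof.
move=> FNy lF; elim: s => [|i s IH].
  by apply/lower_semicontinuousE => x a; rewrite big_nil => a0; apply: nearW => y; rewrite big_nil.
under eq_fun do rewrite big_cons.
by apply: lower_semicontinuousD => // x; exact: esum_neqNy.
Qed.

Lemma continuous_lower_semicontinuous {h : T -> R} :
  continuous h -> lower_semicontinuous (fun x => (h x)%:E).
Proof.
move=> ch x a; rewrite lte_fin => ah; exists (h @^-1` [set r | (a < r)%R]) => [|y /=].
  by apply: ch; apply: open_nbhs_nbhs; split; [exact: open_gt|].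
by rewrite lte_fin.
Qed.

Lemma lower_semicontinuous_comp {U : topologicalType} {h : T -> U} {f : U -> \bar R} :
  continuous h -> lower_semicontinuous f -> lower_semicontinuous (f \o h).
Proof. by move=> ch lf x a /lf[V hV fV]; exists (h @^-1` V) => [|y /fV]; first exact: ch. Qed.

Lemma compact_lower_semicontinuous_min (A : set T) f :
  compact A -> A !=set0 -> lower_semicontinuous f ->
  exists2 x, A x & forall y, A y -> f x <= f y.
Proof.
move=> cA [x0 Ax0] /lower_semicontinuousE lf.
pose m := ereal_inf (f @` A).
suff [x Ax fxm] : exists2 x, A x & f x <= m.
  by exists x => // y Ay; apply: le_trans fxm (ereal_inf_lbound _); exists y.
have [->|] := eqVneq m +oo; first by exists x0; rewrite ?leey.
rewrite -ltey => /lte_dense_EFin[a0 /andP[ma0 _]].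
pose B a := [set y | A y /\ f y < a%:E].
have FF : Filter (filter_from [set a : R | m < a%:E] B).
  apply: filter_from_filter; first by exists a0.
  move=> a b ma mb; exists (Num.min a b); first by rewrite /= EFin_min lt_min ma mb.
  by move=> y [Ay]; rewrite EFin_min lt_min => /andP[ya yb].
have PF : ProperFilter (filter_from [set a : R | m < a%:E] B).
  by apply: filter_from_proper => a /ereal_inf_lt[_ [y Ay <-] fya]; exists y.
have [x [Ax clx]] := cA _ PF (ex_intro2 _ _ a0 ma0 (fun y => @proj1 _ _)).
exists x => //; rewrite leNgt; apply/negP => /lte_dense_EFin[a /andP[ma afx]].
have [z [[_ fza] afz]] := clx (B a) _ (@in_filter_from _ _ _ B a ma) (lf x a afx).
by have := lt_trans afz fza; rewrite ltxx.
Qed.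

End lower_semicontinuous.

Section derive_near.
Context {R : realType}.
Implicit Types (F : set_system R) (f g : R -> R).

Lemma derive1_near {F} {PF : ProperFilter F} {g x k} : F `=>` 0^' -> derivable g x 1 ->
  (\forall h \near F, g (h + x) = g x + h * k) -> derive1 g x = k.
Proof.
move=> F0 dg gF; rewrite derive1E.
apply: (cvg_unique _ (cvg_trans (cvg_app _ F0) dg)); first exact: norm_hausdorff.
have F_neq0 : \forall h \near F, h != 0 by apply: F0; exact: (nbhs_dnbhs_neq (0 : R)).
apply: (cvg_near_cst k); apply: filterS2 F_neq0 gF => h h0 ghx.
by rewrite /= -[h%:A]/(h * 1) mulr1 ghx addrAC subrr add0r -[_ *: _]/(_ * _) mulKf.
Qed.

Lemma derive2_near {F} {PF : ProperFilter F} {f y} k : F `=>` 0^' ->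
  (\forall x \near y, derivable f x 1) -> derivable (derive1 f) y 1 ->
  (\forall h \near F, f (h + y) = f y + h * k) ->
  (\forall h \near F, \forall h' \near F, f (h' + (h + y)) = f (h + y) + h' * k) ->
  derive1 (derive1 f) y = 0.
Proof.
move=> F0 df d2f fy fh.
have dfF : \forall h \near F, derivable f (h + y) 1.
  apply: (F0); apply: nbhs_dnbhs; move/nbhs0P: (df).
  by apply: filterS => h; rewrite addrC.
apply: (derive1_near F0 d2f); rewrite (derive1_near F0 (nbhs_singleton df) fy).
apply: filterS2 dfF fh => h dfh fhh; rewrite mulr0 addr0; exact: derive1_near F0 dfh fhh.
Qed.

Lemma derive2_affine_segment {f y D s} : D != 0 ->
  (forall t, 0 <= t <= 1 -> f (y + t * D) = f y + t * s) ->
  (\forall x \near y, derivable f x 1) -> derivable (derive1 f) y 1 ->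
  derive1 (derive1 f) y = 0.
Proof.
move=> D0 aff df d2f.
(* The image of 0^'+ under t |-> t * D tends to 0 from the side of D, so one
   argument covers both signs of D. *)
have tD0 : (fun t => t * D) @ 0^'+ --> (0 : R).
  apply: cvg_at_right_filter; rewrite -[X in _ --> X](mul0r D).
  exact: mulrr_continuous.
have F0 : (fun t => t * D) @ 0^'+ `=>` 0^'.
  move=> P /tD0 tDP; apply: filterS2 (nbhs_right_gt 0) tDP => t t0; apply.
  by rewrite mulf_neq0 // gt_eqF.
have affF t : 0 <= t <= 1 -> f (t * D + y) = f y + t * D * (s / D).
  by move=> t01; rewrite addrC aff // -mulrA [D * _]mulrC divfK.
apply: (derive2_near (s / D) F0 df d2f).
  rewrite near_map; near=> t; apply: affF; apply/andP; split; near: t.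
    exact: nbhs_right_ge.
  exact: nbhs_right_ltW ltr01.
rewrite near_map; near=> t; rewrite near_map; near=> t'.
have t0 : 0 < t by near: t; exact: nbhs_right_gt.
have t1 : t < 1 / 2 by near: t; apply: nbhs_right_lt; lra.
have t'0 : 0 < t' by near: t'; exact: nbhs_right_gt.
have t'1 : t' < 1 / 2 by near: t'; apply: nbhs_right_lt; lra.
rewrite addrA -mulrDl !affF; first ring.
  all: apply/andP; split; lra.
Unshelve. all: by end_near.
Qed.

End derive_near.

Section fconj.
Context {R : realType} {phi : R -> \bar R}.
Hypothesis phi_pcc : proper_closed_convex phi.
Local Notation psi := (fconj phi).

Lemma fconj_ge x y : ((x * y)%:E - phi x <= psi y)%E.
Proof. by apply: ereal_sup_ubound; exists x. Qed.

Lemma dom_fineK {x} : (phi x < +oo)%E -> (fine (phi x))%:E = phi x.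
Proof. by case: phi_pcc => phiNy *; rewrite fineK // fin_numE phiNy lt_eqF. Qed.

Lemma fconj_neqNy y : psi y != -oo%E.
Proof.
case: phi_pcc => _ [x phix] _ _; rewrite -ltNye (lt_le_trans _ (fconj_ge x y)) //.
by rewrite -(dom_fineK phix) -EFinB ltNyr.
Qed.

Lemma fconj_lsc : lower_semicontinuous psi.
Proof.
apply/lower_semicontinuousE => y a /ereal_sup_gt[_ [x _ <-]].
have [phix|] := ltP (phi x) +oo%E; last first.
  by rewrite leye_eq => /eqP ->; rewrite addeNy ltNge leNye.
rewrite -(dom_fineK phix) -EFinB => axy.
have cx : continuous (fun z => x * z - fine (phi x)).
  by move=> z; apply: continuousB; [exact: mulrl_continuous | exact: cst_continuous].
have /lower_semicontinuousE/(_ y a axy) := continuous_lower_semicontinuous cx.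
apply: filterS => z /lt_le_trans; apply.
by rewrite EFinB dom_fineK // fconj_ge.
Qed.

Lemma fconj_convex {a b t} : (psi a < +oo)%E -> (psi b < +oo)%E -> 0 <= t <= 1 ->
  (psi (t * a + (1 - t) * b) <= (t * fine (psi a) + (1 - t) * fine (psi b))%:E)%E.
Proof.
move=> psia psib /andP[t0 t1]; apply: ge_ereal_sup => _ [x _ <-].
have [phix|] := ltP (phi x) +oo%E; last first.
  by rewrite leye_eq => /eqP ->; rewrite addeNy leNye.
have psi_fin c : (psi c < +oo)%E -> x * c - fine (phi x) <= fine (psi c).
  move=> psic; rewrite -lee_fin EFinB dom_fineK // fineK ?fconj_ge //.
  by rewrite fin_numE fconj_neqNy lt_eqF.
rewrite -(dom_fineK phix) -EFinB lee_fin.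
have -> : x * (t * a + (1 - t) * b) - fine (phi x) =
    t * (x * a - fine (phi x)) + (1 - t) * (x * b - fine (phi x)) by ring.
by rewrite lerD // ler_wpM2l ?subr_ge0 // psi_fin.
Qed.

Lemma fconj_coercive {xh} : interior (edom phi) xh ->
  exists2 d : R, 0 < d & exists c : R, forall y,
    ((d * `|y| - c)%:E <= psi y - (y * xh)%:E)%E.
Proof.
move=> /nbhs_ballP[e e0 xhe]; pose d := e / 2.
have d0 : 0 < d by rewrite divr_gt0.
have dom s : `|s| <= d -> (phi (xh + s) < +oo)%E.
  move=> sd; apply: xhe; rewrite /ball /= opprD addNKr normrN.
  by apply: le_lt_trans sd _; rewrite /d ltr_pdivrMr // ltr_pMr // ltr1n.
pose c s := fine (phi (xh + s)).
have bound s y : `|s| <= d -> ((s * y - c s)%:E <= psi y - (y * xh)%:E)%E.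
  move=> sd; apply: le_trans (leeB (fconj_ge (xh + s) y) (lexx _)).
  by rewrite -(dom_fineK (dom s sd)) -!EFinB lee_fin /c mulrDl [y * xh]mulrC; lra.
exists d => //; exists (Num.max (c d) (c (- d))) => y.
have [y0|y0] := leP 0 y.
  apply: le_trans (bound d y _); last by rewrite ger0_norm // ltW.
  by rewrite lee_fin ger0_norm // lerD2l lerN2 le_max lexx.
apply: le_trans (bound (- d) y _); last by rewrite normrN ger0_norm // ltW.
by rewrite lee_fin ltr0_norm // mulrN mulNr lerD2l lerN2 le_max lexx orbT.
Qed.

End fconj.

Section symmetric_hollow.
Context {R : realType} {n : nat}.
Implicit Types (u v : 'I_n -> R) (C : 'M[R]_n).

Lemma Sh_convex {C C' t} : Sh C -> Sh C' -> 0 <= t <= 1 ->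
  Sh (\matrix_(i, j) (C i j + t * (C' i j - C i j))).
Proof.
move=> [C0 Cs Cd] [C0' Cs' Cd'] /andP[t0 t1]; split=> [i j|i j|i]; rewrite !mxE.
- by have := C0 i j; have := C0' i j; nra.
- by rewrite Cs Cs'.
- by rewrite Cd Cd' subrr mulr0 addr0.
Qed.

Lemma Sh_eq {u v u' v' C C'} : Sh C -> Sh C' ->
  (forall i j, u' i + v' j - C' i j = u i + v j - C i j) -> C' = C.
Proof.
move=> [_ Cs Cd] [_ Cs' Cd'] W; apply/matrixP => i j.
(* 2 C_ij = W_ii + W_jj - W_ij - W_ji for W = u (+) v - C. *)
have := W i j; have := W j i; have := W i i; have := W j j.
have := Cs i j; have := Cs' i j; have := Cd i; have := Cd j; have := Cd' i; have := Cd' j.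
lra.
Qed.

Lemma Sh_gauge_bound {u v C a} i0 : Sh C -> (forall i j, `|u i + v j - C i j| <= a) ->
  [/\ forall i, `|u i - u i0| <= 4 * a, forall j, `|v j + u i0| <= 4 * a
    & forall i j, `|C i j| <= 4 * a].
Proof.
move=> [_ Cs Cd] W.
have {}W i j : - a <= u i + v j - C i j /\ u i + v j - C i j <= a.
  by apply/andP; rewrite -ler_norml.
split=> [i|j|i j]; rewrite ler_norml; apply/andP.
- have := W i i0; have := W i0 i0; have := W i i; have := W i0 i.
  have := Cs i i0; have := Cd i; have := Cd i0; lra.
- have := W i0 j; have := W j i0; have := W i0 i0; have := W j j.
  have := Cs i0 j; have := Cd i0; have := Cd j; lra.
- have := W i j; have := W j i; have := W i i; have := W j j.
  have := Cs i j; have := Cd i; have := Cd j; lra.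
Qed.

End symmetric_hollow.

(* A triple (u, v, C) as a point of the product space R^(I + I + I * I), where
   boxes are compact by Tychonoff's theorem. *)
Definition param_index n := (('I_n + 'I_n) + ('I_n * 'I_n))%type.
Definition param (R : realType) n := {ptws param_index n -> R}.

Section parameter_space.
Context {R : realType} {n : nat}.
Local Notation param := (param R n).

Definition param_u (p : param) (i : 'I_n) : R := p (inl (inl i)).
Definition param_v (p : param) (j : 'I_n) : R := p (inl (inr j)).
Definition param_C (p : param) : 'M[R]_n := \matrix_(i, j) p (inr (i, j)).

Definition param_of (u v : 'I_n -> R) (C : 'M[R]_n) : param := fun k =>
  match k with inl (inl i) => u i | inl (inr j) => v j | inr (i, j) => C i j end.

Lemma param_ofC u v C : param_C (param_of u v C) = C.
Proof. by apply/matrixP => i j; rewrite mxE. Qed.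

Lemma continuous_param_coord k : continuous (fun p : param => p k).
Proof. exact: proj_continuous. Qed.

Lemma compact_param_box (M : R) :
  compact [set p : param | forall k, `[- M, M]%classic (p k)].
Proof.
exact: (@tychonoff (param_index n) (fun=> R) _ (fun=> @segment_compact R (- M) M)).
Qed.

Lemma closed_param_Sh : closed [set p : param | Sh (param_C p)].
Proof.
have closed_pre (g : param -> R) (A : set R) : continuous g -> closed A -> closed (g @^-1` A).
  by move=> cg cA; apply: preimage_closed => // p _; exact: cg.
have cont_sub k l : continuous (fun p : param => p k - p l).
  by move=> p; apply: continuousB; exact: continuous_param_coord.
have -> : [set p : param | Sh (param_C p)] = \bigcap_(ij in [set: 'I_n * 'I_n])
    ([set p : param | 0 <= p (inr ij)] `&`
     [set p : param | p (inr ij) - p (inr (ij.2, ij.1)) = 0] `&`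
     [set p : param | p (inr (ij.1, ij.1)) = 0]).
  apply/seteqP; split => p /=.
    case=> C0 Cs Cd [i j] _; move: (C0 i j) (Cs i j) (Cd i); rewrite !mxE => C0ij Csij Cdi.
    by split; [split|]; rewrite /= //; rewrite Csij subrr.
  move=> Sp; split=> [i j|i j|i]; rewrite !mxE.
  - by case: (Sp (i, j) I) => -[].
  - by case: (Sp (i, j) I) => -[_ /eqP]; rewrite subr_eq0 => /eqP.
  - by case: (Sp (i, i) I).
apply: closed_bigI => ij _; do 2?apply: closedI.
- apply: (closed_pre (fun p => p _) [set x | 0 <= x]); [exact: continuous_param_coord|].
  exact: closed_ge.
- apply: (closed_pre (fun p => p _ - p _) [set x | x = 0]); [exact: cont_sub|].
  exact: closed_eq.
- apply: (closed_pre (fun p => p _) [set x | x = 0]); [exact: continuous_param_coord|].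
  exact: closed_eq.
Qed.

Lemma continuous_param_Zmat (gamma : R) i j :
  continuous (fun p : param => Zmat gamma (param_u p) (param_v p) (param_C p) i j).
Proof.
have -> : (fun p : param => Zmat gamma (param_u p) (param_v p) (param_C p) i j) =
    (fun p => (p (inl (inl i)) + p (inl (inr j)) - p (inr (i, j))) / gamma).
  by apply/funext => p; rewrite /Zmat mxE.
move=> p; have cc := continuous_param_coord.
have := continuousM (continuousB (continuousD (cc (inl (inl i)) p) (cc (inl (inr j)) p))
  (cc (inr (i, j)) p)) (@cst_continuous _ _ gamma^-1 p).
by [].
Qed.

End parameter_space.

Section minimizer.
Context {R : realType} {n : nat} {phi : R -> \bar R} (gamma : R) (Xh : 'M[R]_n).
Hypotheses (gamma_gt0 : 0 < gamma) (phi_pcc : proper_closed_convex phi).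
Local Notation psi := (fconj phi).
Local Notation E := (Eobj psi gamma Xh).
Local Notation Z := (Zmat gamma).
Implicit Types (u v : 'I_n -> R) (C : 'M[R]_n).
Local Notation Eterm u v C ij :=
  (fine (psi (Z u v C ij.1 ij.2)) - Z u v C ij.1 ij.2 * Xh ij.1 ij.2).

Lemma Eobj_term_neqNy y x : (psi y - (y * x)%:E)%E != -oo%E.
Proof. by rewrite adde_eq_ninfty negb_or (fconj_neqNy phi_pcc). Qed.

Lemma Eobj_fin_num {u v C} : (E u v C < +oo)%E ->
  forall i j, psi (Z u v C i j) \is a fin_num.
Proof.
move=> Elty i j; have : E u v C \is a fin_num.
  rewrite fin_numElt Elty andbT ltNye esum_neqNy // => i'.
  by rewrite esum_neqNy // => j'; exact: Eobj_term_neqNy.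
move=> /sum_fin_numP/(_ i (mem_index_enum _) isT)/sum_fin_numP/(_ j (mem_index_enum _) isT).
by rewrite fin_numB => /andP[].
Qed.

Lemma EobjE {u v C} : (forall i j, psi (Z u v C i j) \is a fin_num) ->
  E u v C = (\sum_ij Eterm u v C ij)%:E.
Proof.
move=> finZ; rewrite /Eobj pair_big -sumEFin; apply: eq_bigr => -[i j] _.
by rewrite EFinB fineK.
Qed.

Lemma Eobj_shift u v C c : E (fun i => u i - c) (fun j => v j + c) C = E u v C.
Proof.
apply: eq_bigr => i _; apply: eq_bigr => j _.
by rewrite /Zmat; congr (psi (_ / _) - ((_ / _) * _)%:E)%E; ring.
Qed.

Lemma Eobj_sublevel_bounded (r : R) : (forall i j, interior (edom phi) (Xh i j)) ->
  exists b, forall u v C, (E u v C <= r%:E)%E -> forall i j, `|u i + v j - C i j| <= b.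
Proof.
move=> Xh_int.
have /choice[dc dc_coercive] : forall ij : 'I_n * 'I_n, exists dc : R * R, 0 < dc.1 /\
    forall y, ((dc.1 * `|y| - dc.2)%:E <= psi y - (y * Xh ij.1 ij.2)%:E)%E.
  by move=> [i j]; have [d d0 [c dc]] := fconj_coercive phi_pcc (Xh_int i j); exists (d, c).
pose K := r + \sum_ij `|(dc ij).2|.
exists (gamma * \sum_ij `|K / (dc ij).1|) => u v C Er i j.
pose t (ij : 'I_n * 'I_n) := Eterm u v C ij.
have finZ := Eobj_fin_num (le_lt_trans Er (ltry _)).
have tge ij : (dc ij).1 * `|Z u v C ij.1 ij.2| - (dc ij).2 <= t ij.
  by have := (dc_coercive ij).2 (Z u v C ij.1 ij.2); rewrite -(fineK (finZ _ _)) -EFinB lee_fin.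
have tK : t (i, j) + `|(dc (i, j)).2| <= K.
  apply: le_trans (ler_psum_term (fun ij => t ij + `|(dc ij).2|) (i, j) _) _.
    move=> ij; have := tge ij; have := ler_norm (dc ij).2.
    have := mulr_ge0 (ltW (dc_coercive ij).1) (normr_ge0 (Z u v C ij.1 ij.2)); lra.
  by rewrite big_split lerD2r /t -lee_fin -(EobjE finZ).
have Zle : `|Z u v C i j| <= K / (dc (i, j)).1.
  rewrite ler_pdivlMr ?(dc_coercive (i, j)).1 // mulrC.
  by have := tge (i, j); have := ler_norm (dc (i, j)).2; lra.
have -> : u i + v j - C i j = gamma * Z u v C i j by rewrite /Zmat mulrC divfK ?gt_eqF.
rewrite normrM gtr0_norm // ler_pM2l //; apply: le_trans Zle _.
apply: le_trans (ler_norm _) _.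
exact: (ler_psum_term (fun ij => `|K / (dc ij).1|)).
Qed.

Lemma lower_semicontinuous_param_Eobj :
  lower_semicontinuous (fun p : param R n => E (param_u p) (param_v p) (param_C p)).
Proof.
apply: lower_semicontinuous_sum => [i p|i].
  by apply: esum_neqNy => j; exact: Eobj_term_neqNy.
apply: lower_semicontinuous_sum => [j p|j]; first exact: Eobj_term_neqNy.
apply: lower_semicontinuousD => [p|p||]; first exact: (fconj_neqNy phi_pcc).
- by [].
- exact: (lower_semicontinuous_comp (continuous_param_Zmat gamma i j) (fconj_lsc phi_pcc)).
- apply: (@continuous_lower_semicontinuous _ _
    (fun p => - (Z (param_u p) (param_v p) (param_C p) i j * Xh i j))) => p.
  have := continuousN (continuousM (continuous_param_Zmat gamma i j p)
    (@cst_continuous _ _ (Xh i j) p)).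
  by [].
Qed.

Lemma Eobj_minimizer_exists : (0 < n)%N -> (forall i j, interior (edom phi) (Xh i j)) ->
  exists u v C, is_minimizer psi gamma Xh u v C.
Proof.
move=> n_gt0 Xh_int.
have [[u0 [v0 [C0 [ShC0 E0lty]]]]|E_oo] :=
  pselect (exists u v C, Sh C /\ (E u v C < +oo)%E); last first.
  exists (fun=> 0), (fun=> 0), 0; split=> [|u v C ShC]; first by split=> *; rewrite !mxE.
  rewrite leNgt; apply/negP => /lt_le_trans/(_ (leey _)) Elty.
  by apply: E_oo; exists u, v, C.
pose r := fine (E u0 v0 C0).
have E0r : E u0 v0 C0 = r%:E by rewrite /r (EobjE (Eobj_fin_num E0lty)).
have [b Wb] := Eobj_sublevel_bounded r Xh_int.
(* Normalising to u i0 = 0 sends the sublevel set {E <= r} into the compact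
   set A without changing E. *)
pose i0 := Ordinal n_gt0.
pose normalize u v C := param_of (fun i => u i - u i0) (fun j => v j + u i0) C.
pose A := [set p : param R n | (forall k, `[- (4 * b), 4 * b]%classic (p k)) /\ Sh (param_C p)].
pose F p := E (param_u p) (param_v p) (param_C p).
have F_normalize u v C : F (normalize u v C) = E u v C.
  by rewrite /F /normalize param_ofC; exact: Eobj_shift.
have A_normalize u v C : Sh C -> (E u v C <= r%:E)%E -> A (normalize u v C).
  move=> ShC Er; have [bu bv bC] := Sh_gauge_bound i0 ShC (Wb u v C Er).
  split; last by rewrite param_ofC.
  by case=> [[i|j]|[i j]]; rewrite /= in_itv /= -ler_norml.
have [p Ap pmin] : exists2 p, A p & forall q, A q -> (F p <= F q)%E.
  apply: compact_lower_semicontinuous_min lower_semicontinuous_param_Eobj.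
    exact: compact_closedI (compact_param_box _) closed_param_Sh.
  by exists (normalize u0 v0 C0); apply: A_normalize; rewrite ?E0r.
exists (param_u p), (param_v p), (param_C p); split=> [|u v C ShC]; first by case: Ap.
have [Er|rE] := leP (E u v C) r%:E.
  by rewrite -(F_normalize u v C); exact: pmin (A_normalize _ _ _ ShC Er).
apply: le_trans (ltW rE); rewrite -E0r -(F_normalize u0 v0 C0).
by apply: pmin; apply: A_normalize; rewrite ?E0r.
Qed.

Lemma minimizer_segment_affine {u v C u' v' C'} :
  is_minimizer psi gamma Xh u v C -> is_minimizer psi gamma Xh u' v' C' ->
  (E u v C < +oo)%E -> forall t, 0 <= t <= 1 -> forall i j,
  fine (psi (Z u v C i j + t * (Z u' v' C' i j - Z u v C i j))) =
    fine (psi (Z u v C i j)) + t * (fine (psi (Z u' v' C' i j)) - fine (psi (Z u v C i j))).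
Proof.
move=> [ShC minC] [ShC' minC'] Elty t t01.
have E'E : E u' v' C' = E u v C by apply/le_anti; rewrite minC' // minC.
have finZ := Eobj_fin_num Elty.
have finZ' : forall i j, psi (Z u' v' C' i j) \is a fin_num.
  by apply: Eobj_fin_num; rewrite E'E.
pose ut i := u i + t * (u' i - u i).
pose vt j := v j + t * (v' j - v j).
pose Ct := \matrix_(i, j) (C i j + t * (C' i j - C i j)).
have Zt i j : Z ut vt Ct i j = Z u v C i j + t * (Z u' v' C' i j - Z u v C i j).
  by rewrite /Zmat mxE /ut /vt; field; rewrite gt_eqF.
have lty y : psi y \is a fin_num -> (psi y < +oo)%E by rewrite fin_numElt => /andP[].
have cvx i j : (psi (Z ut vt Ct i j) <=
    (t * fine (psi (Z u' v' C' i j)) + (1 - t) * fine (psi (Z u v C i j)))%:E)%E.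
  rewrite Zt (_ : Z u v C i j + _ = t * Z u' v' C' i j + (1 - t) * Z u v C i j); last by ring.
  by apply: (fconj_convex phi_pcc) => //; apply: lty; [exact: finZ' | exact: finZ].
have finZt i j : psi (Z ut vt Ct i j) \is a fin_num.
  by rewrite fin_numElt ltNye fconj_neqNy // (le_lt_trans (cvx i j)) ?ltry.
(* The linear parts of the terms cancel, so gap is the convexity gap of psi. *)
pose gap (ij : 'I_n * 'I_n) :=
  t * Eterm u' v' C' ij + (1 - t) * Eterm u v C ij - Eterm ut vt Ct ij.
have gapE ij : gap ij = t * fine (psi (Z u' v' C' ij.1 ij.2)) +
    (1 - t) * fine (psi (Z u v C ij.1 ij.2)) - fine (psi (Z ut vt Ct ij.1 ij.2)).
  by rewrite /gap Zt; ring.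
have gap_ge0 ij : 0 <= gap ij.
  by rewrite gapE subr_ge0 -lee_fin fineK // cvx.
have gap_sum0 : \sum_ij gap ij = 0.
  apply/le_anti; rewrite sumr_ge0 // andbT.
  have := minC ut vt Ct (Sh_convex ShC ShC' t01).
  move: E'E; rewrite (EobjE finZ) (EobjE finZ') (EobjE finZt) lee_fin => -[S'S] St.
  by rewrite sumrB big_split -!mulr_sumr /= S'S; lra.
move=> i j; have := psumr_eq0P (fun ij _ => gap_ge0 ij) gap_sum0 (i := (i, j)) isT.
by rewrite gapE /= Zt; lra.
Qed.

Lemma minimizer_C_unique u v C u' v' C' :
  is_minimizer psi gamma Xh u v C -> (forall i j, twice_diff_pos psi (Z u v C i j)) ->
  is_minimizer psi gamma Xh u' v' C' -> C' = C.
Proof.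
move=> minC psi2 minC'.
have finZ i j : psi (Z u v C i j) \is a fin_num by case: (psi2 i j) => /nbhs_singleton[].
have Elty : (E u v C < +oo)%E by rewrite (EobjE finZ) ltry.
have aff := minimizer_segment_affine minC minC' Elty.
have W i j : u' i + v' j - C' i j = u i + v j - C i j.
  have ZZ : Z u' v' C' i j = Z u v C i j.
    apply/eqP; rewrite -subr_eq0; apply: contraT => D0; case: (psi2 i j) => df d2f.
    have aff_ij t t01 := aff t t01 i j.
    by rewrite (derive2_affine_segment (f := fun x => fine (psi x)) D0 aff_ij) ?ltxx //;
      apply: filterS df => x [].
  by move: ZZ; rewrite /Zmat => /(congr1 (fun x => x * gamma)); rewrite !divfK // gt_eqF.
exact: Sh_eq minC.1 minC'.1 W.
Qed.

End minimizer.

Theorem proposition7 (R : realType) (n : nat) (gamma : R) (phi : R -> \bar R)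
    (mu nu : 'I_n -> R) (Xh : 'M[R]_n) :
  (0 < n)%N -> 0 < gamma -> proper_closed_convex phi ->
  prob_vec mu -> prob_vec nu -> transport_plan mu nu Xh ->
  (forall i j, interior (edom phi) (Xh i j)) ->
  (exists (u v : 'I_n -> R) (C : 'M[R]_n), is_minimizer (fconj phi) gamma Xh u v C) /\
  (forall (u v : 'I_n -> R) (C : 'M[R]_n),
     is_minimizer (fconj phi) gamma Xh u v C ->
     (forall i j, twice_diff_pos (fconj phi) (Zmat gamma u v C i j)) ->
     forall (u' v' : 'I_n -> R) (C' : 'M[R]_n),
       is_minimizer (fconj phi) gamma Xh u' v' C' -> C' = C).
Proof.
move=> n_gt0 gamma_gt0 phi_pcc _ _ _ Xh_int; split.
  exact: Eobj_minimizer_exists.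
move=> u v C minC psi2 u' v' C' minC'.
exact: minimizer_C_unique minC psi2 minC'.
Qed.
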